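(* Let $P\subseteq S_n$ be a permutation array with ${\rm hd}(P)=d$ and $|P^{\sf CT}|\ge 2$. Then ${\rm hd}(P^{\sf CT})>{\rm hd}(P)$ if and only if both of the following hold: (1) any $\sigma,\tau\in P$ with ${\rm hd}(\sigma,\tau)=d$ satisfy $\sigma^{\sf CT}=\tau^{\sf CT}$; and (2) any $\sigma,\tau\in P$ with ${\rm hd}(\sigma,\tau)>d$ satisfy ${\rm hd}(\sigma^{\sf CT},\tau^{\sf CT})>d$ or $\sigma^{\sf CT}=\tau^{\sf CT}$.
   Context: $S_n$ is the symmetric group on $\{0,1,\ldots,n-1\}$. A permutation array is a non-empty subset $P\subseteq S_n$. ${\rm hd}(\sigma,\tau)=|\{x:\sigma(x)\neq\tau(x)\}|$ and ${\rm hd}(P)=\min\{{\rm hd}(\sigma,\tau):\sigma,\tau\in P,\ \sigma\neq\tau\}$. The contraction of $\sigma\in S_n$ is $\sigma^{\sf CT}\in S_{n-1}$ (on $\{0,\ldots,n-2\}$) defined by $\sigma^{\sf CT}(x)=\sigma(n-1)$ if $x=\sigma^{-1}(n-1)$ and $\sigma^{\sf CT}(x)=\sigma(x)$ otherwise (i.e. delete $n-1$ from the cycle notation of $\sigma$); $P^{\sf CT}=\{\sigma^{\sf CT}:\sigma\in P\}$. *)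

From mathcomp Require Import all_boot all_fingroup.
Set Implicit Arguments. Unset Strict Implicit. Unset Printing Implicit Defensive.

(* S_k is {perm 'I_k}; a permutation array is a nonempty {set {perm 'I_k}}. *)

Definition hd (k : nat) (s t : {perm 'I_k}) : nat := #|[pred x | s x != t x]|.

(* hd(P) = min over distinct pairs (junk value k if |P| < 2, never used) *)
Definition hdP (k : nat) (P : {set {perm 'I_k}}) : nat :=
  \big[minn/k]_(s in P) \big[minn/k]_(t in P | t != s) hd s t.

Section Contraction.
Variable n : nat.
Implicit Types (s : {perm 'I_n.+1}) (x : 'I_n).

(* sigma^CT(x) = sigma(n) if sigma(x) = n, else sigma(x)  (here n-1 of the paper is ord_max) *)
Definition ct_val s x : nat :=
  let y := s (widen_ord (leqnSn n) x) in
  if y == ord_max then val (s ord_max) else val y.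

Lemma ct_val_lt s x : ct_val s x < n.
Proof.
rewrite /ct_val; set w := widen_ord _ x.
have wM : w != ord_max by rewrite -val_eqE /= neq_ltn ltn_ord.
case: ifP => [/eqP E|/negbT ne].
  have : s ord_max != ord_max.
    apply/eqP => E2; move: wM; have : s w = s ord_max by rewrite E E2.
    by move/perm_inj => ->; rewrite eqxx.
  by rewrite -val_eqE /= => H; have := ltn_ord (s ord_max); rewrite ltnS leq_eqVlt (negbTE H).
have := ltn_ord (s w); rewrite ltnS leq_eqVlt; move: ne; rewrite -val_eqE /= => ne.
by rewrite (negbTE ne).
Qed.

Definition ct_fun s x : 'I_n := Ordinal (ct_val_lt s x).

Lemma ct_fun_inj s : injective (ct_fun s).
Proof.
move=> x1 x2 /(congr1 val); rewrite /= /ct_val.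
set a := widen_ord _ x1; set b := widen_ord _ x2.
have ab : a = b -> x1 = x2 by move/(congr1 val) => /= h; apply/val_inj.
have aM : a != ord_max by rewrite -val_eqE /= neq_ltn ltn_ord.
have bM : b != ord_max by rewrite -val_eqE /= neq_ltn ltn_ord.
case: ifP => [/eqP Ea|_]; case: ifP => [/eqP Eb|_].
- by move=> _; apply: ab; apply: (@perm_inj _ s); rewrite Ea Eb.
- move/val_inj/perm_inj => E; by move: bM; rewrite -E eqxx.
- move/val_inj/perm_inj => E; by move: aM; rewrite E eqxx.
- by move/val_inj/perm_inj.
Qed.

Definition ct s : {perm 'I_n} := perm (@ct_fun_inj s).

Definition ctset (P : {set {perm 'I_n.+1}}) : {set {perm 'I_n}} :=
  [set ct s | s in P].

End Contraction.

From mathcomp Require Import all_boot all_order all_fingroup.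
Set Implicit Arguments. Unset Strict Implicit. Unset Printing Implicit Defensive.
Import Order.TTheory.

(* Contraction never increases Hamming distance: the points where [ct s] and
   [ct t] differ inject into those where [s] and [t] differ, the only point [x]
   not sent to itself being the one with [s x = t x = n], which is sent to [n]
   (and there [s n <> t n]).  So [hd(P^CT) > d] means that every pair of [P]
   with distinct contractions keeps a contracted distance [> d]; as [hd(P) = d],
   pairs at distance [d] must collapse, and pairs at distance [> d] must either
   collapse or stay above [d]. *)

Section ContractionDistance.
Variable n : nat.
Implicit Types s t : {perm 'I_n.+1}.

Local Notation w := (widen_ord (leqnSn n)).

Lemma widen_neq_max (x : 'I_n) : w x != ord_max.
Proof. by rewrite -val_eqE /= neq_ltn ltn_ord. Qed.

Lemma ctE s x :
  val (ct s x) = if s (w x) == ord_max then val (s ord_max) else val (s (w x)).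
Proof. by rewrite /ct permE. Qed.

Lemma ct_neq_agree_max s t x : ct s x != ct t x -> s (w x) = t (w x) ->
  s (w x) = ord_max /\ s ord_max != t ord_max.
Proof.
move=> + E; rewrite -val_eqE !ctE -E.
by case: (s (w x) =P ord_max) => [-> | _]; rewrite ?eqxx // val_eqE.
Qed.

Lemma hd_ct_le s t : hd (ct s) (ct t) <= hd s t.
Proof.
pose f x := if s (w x) == t (w x) then ord_max else w x.
have w_inj : injective w by move=> x y /(congr1 val) /= /val_inj.
rewrite /hd -(card_in_imset (f := f)).
  apply/subset_leq_card/subsetP => _ /imsetP[x /[!inE] ne ->]; rewrite /f.
  by case: (s (w x) =P t (w x)) => [/(ct_neq_agree_max ne)[] //|/eqP].
move=> x y /[!inE] ne_x ne_y; rewrite /f.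
case: (s (w x) =P t (w x)) => [/(ct_neq_agree_max ne_x)[sx _]|_];
  case: (s (w y) =P t (w y)) => [/(ct_neq_agree_max ne_y)[sy _]|_].
- by move=> _; apply/w_inj/(@perm_inj _ s); rewrite sx sy.
- by move=> E; move: (widen_neq_max y); rewrite -E eqxx.
- by move=> E; move: (widen_neq_max x); rewrite E eqxx.
- exact: w_inj.
Qed.

End ContractionDistance.

Lemma hd_le k (s t : {perm 'I_k}) : hd s t <= k.
Proof. by rewrite -[k in _ <= k]card_ord max_card. Qed.

Lemma hdP_le k (Q : {set {perm 'I_k}}) s t :
  s \in Q -> t \in Q -> t != s -> hdP Q <= hd s t.
Proof.
move=> sQ tQ ts; rewrite /hdP -minEnat -leEnat.
by apply: bigmin_inf sQ _; apply: bigmin_le_cond; rewrite tQ.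
Qed.

Lemma hdP_gt k (Q : {set {perm 'I_k}}) d : 1 < #|Q| ->
  d < hdP Q <-> {in Q &, forall s t, t != s -> d < hd s t}.
Proof.
case/card_gt1P => s0 [t0 [s0Q t0Q st0]]; rewrite /hdP -minEnat -[d < _]/(d < _)%O.
split=> [/bigmin_gtP[_ gt_d] s t sQ tQ ts | gt_d].
  by case/bigmin_gtP: (gt_d s sQ) => _ /(_ t); rewrite tQ ts; apply.
have lt_dk : d < k.
  by apply: leq_trans (gt_d s0 t0 s0Q t0Q _) (hd_le _ _); rewrite eq_sym.
apply/bigmin_gtP; split=> // s sQ; apply/bigmin_gtP; split=> // t /andP[tQ ts].
exact: gt_d.
Qed.

Lemma hdP_ctset_gt n (P : {set {perm 'I_n.+1}}) d : 1 < #|ctset P| ->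
  d < hdP (ctset P) <->
  {in P &, forall s t, ct s != ct t -> d < hd (ct s) (ct t)}.
Proof.
move=> ctP_gt1; apply: iff_trans (hdP_gt d ctP_gt1) _.
split=> [gt_d s t sP tP ne | gt_d]; first by apply: gt_d; rewrite ?imset_f // eq_sym.
by move=> _ _ /imsetP[s sP ->] /imsetP[t tP ->] ne; apply: gt_d; rewrite // eq_sym.
Qed.

Theorem theorem3p3 (n d : nat) (P : {set {perm 'I_n.+1}}) :
  P != set0 -> hdP P = d -> 1 < #|ctset P| ->
  (hdP P < hdP (ctset P) <->
   ((forall s t, s \in P -> t \in P -> hd s t = d -> ct s = ct t) /\
    (forall s t, s \in P -> t \in P -> d < hd s t ->
       d < hd (ct s) (ct t) \/ ct s = ct t))).
Proof.
move=> _ hdPE ctP_gt1; rewrite hdPE; apply: iff_trans (hdP_ctset_gt d ctP_gt1) _.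
split=> [gt_ct | [eq_ct gt_ct]].
  split=> [s t sP tP hd_st | s t sP tP _].
    by apply/eqP/contraT => /(gt_ct s t sP tP); rewrite -hd_st ltnNge hd_ct_le.
  by case: (eqVneq (ct s) (ct t)) => [|/(gt_ct s t sP tP)]; [right|left].
move=> s t sP tP ct_st.
have ts : t != s by apply: contraNneq ct_st => ->.
have := hdP_le sP tP ts; rewrite hdPE leq_eqVlt => /orP[/eqP hd_st|lt_d].
  by rewrite (eq_ct s t) ?eqxx in ct_st.
by case: (gt_ct s t sP tP lt_d) => // E; rewrite E eqxx in ct_st.
Qed.
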